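(* Let $(X,\mathcal{A})$ be a measurable space, $f,g\in\mathcal{F}_{[0,1]}^{(X,\mathcal{A})}$ comonotone, $\star:[0,1]^2\to[0,1]$ continuous and non-decreasing in both arguments, $S$ a t-semiconorm, and $\alpha,\beta,\gamma,\lambda,\upsilon,\tau\in(0,\infty)$ with $\gamma\tau\le1$ and $\beta\upsilon\le1$. If for all $a,b,c\in[0,1]$ \[ \big(S((a\star b)^{\alpha},c)\big)^{\lambda}\ \le\ \big[\big(S(a^{\beta},c)\big)^{\upsilon}\star b\big]\wedge\big[a\star\big(S(b^{\gamma},c)\big)^{\tau}\big], \] then for every monotone measure $m$ on $(X,\mathcal{A})$ with $m(X)=1$, \[ \big[\mathbf{I}_S(m,(f\star g)^{\alpha})\big]^{\lambda}\ \le\ \big[\mathbf{I}_S(m,f^{\beta})\big]^{\upsilon}\star\big[\mathbf{I}_S(m,g^{\gamma})\big]^{\tau}. \]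
   Context: A monotone measure on $(X,\mathcal{A})$ is $m:\mathcal{A}\to[0,\infty]$ with $m(\emptyset)=0$, $m(X)>0$, $m(A)\le m(B)$ for $A\subseteq B$. $\mathcal{F}_{[0,1]}^{(X,\mathcal{A})}$ is the set of $\mathcal{A}$-measurable $f:X\to[0,1]$. A t-semiconorm is a map $S:[0,1]^2\to[0,1]$, non-decreasing in both components, with neutral element $0$ (hence $S(a,b)\ge\max(a,b)$). The semiconormed integral is $\mathbf{I}_S(m,f)=\inf\{S(t,m(\{f>t\})) : t\in(0,1]\}$. $f,g$ are comonotone if $(f(x)-f(y))(g(x)-g(y))\ge0$ for all $x,y$. Operations on functions are pointwise. *)

From HB Require Import structures.
From mathcomp Require Import all_boot all_order all_algebra.
From mathcomp Require Import all_classical all_reals all_analysis.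
Set Implicit Arguments. Unset Strict Implicit. Unset Printing Implicit Defensive.
Import Order.TTheory GRing.Theory Num.Theory numFieldNormedType.Exports.
Local Open Scope classical_set_scope.
Local Open Scope ring_scope.

Definition unit01 (R : realType) (a : R) : Prop := 0 <= a <= 1.

Definition monotone_measure d (T : measurableType d) (R : realType)
  (m : set T -> \bar R) : Prop :=
  [/\ m set0 = 0%E, (0 < m setT)%E &
      forall A B, measurable A -> measurable B -> A `<=` B -> (m A <= m B)%E].

Definition F01 d (T : measurableType d) (R : realType) (f : T -> R) : Prop :=
  measurable_fun setT f /\ forall x, unit01 (f x).

Definition comonotone (T : Type) (R : realType) (f g : T -> R) : Prop :=
  forall x y, 0 <= (f x - f y) * (g x - g y).

Definition t_semiconorm (R : realType) (S : R -> R -> R) : Prop :=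
  [/\ forall a b, unit01 a -> unit01 b -> unit01 (S a b),
      forall a a' b, unit01 a -> unit01 a' -> unit01 b -> a <= a' -> S a b <= S a' b,
      forall a b b', unit01 a -> unit01 b -> unit01 b' -> b <= b' -> S a b <= S a b'
    & forall a, unit01 a -> S a 0 = a /\ S 0 a = a].

Definition cont_nondecr_op (R : realType) (op : R -> R -> R) : Prop :=
  [/\ forall a b, unit01 a -> unit01 b -> unit01 (op a b),
      {within [set p : R * R | unit01 p.1 /\ unit01 p.2],
         continuous (fun p : R * R => op p.1 p.2)},
      forall a a' b, unit01 a -> unit01 a' -> unit01 b -> a <= a' -> op a b <= op a' b
    & forall a b b', unit01 a -> unit01 b -> unit01 b' -> b <= b' -> op a b <= op a b'].

(* semiconormed integral I_S(m,f) = inf { S(t, m{f>t}) : t in (0,1] }.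
   m(X)=1 in the theorem, so m takes finite values in [0,1]; we use fine. *)
Definition semiconormed_integral d (T : measurableType d) (R : realType)
  (S : R -> R -> R) (m : set T -> \bar R) (f : T -> R) : R :=
  inf [set S t (fine (m [set x | t < f x])) | t in `]0, 1]].

From HB Require Import structures.
From mathcomp Require Import all_boot all_order all_algebra.
From mathcomp Require Import all_classical all_reals all_analysis.
From mathcomp Require Import lra measurable_realfun.
Import Order.TTheory GRing.Theory Num.Theory numFieldNormedType.Exports.
Local Open Scope classical_set_scope.
Local Open Scope ring_scope.

(* Fix t, s in (0, 1] and put a = t^(1/beta), b = s^(1/gamma), u = (a * b)^alpha
   (writing * for star).  By monotonicity of star the level set
   {(f * g)^alpha > u} lies in {f > a} \/ {g > b}, and comonotonicity makes these
   two sets nested, so it lies in one of them, say {g > b}.  Hence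
   I_S(m, (f * g)^alpha)^lambda <= S(u, m{g > b})^lambda, which the hypothesis
   bounds by a * S(s, m{g^gamma > s})^tau; as a <= t^upsilon (this is where
   beta upsilon <= 1 enters) and t <= S(t, _), this is at most
   S(t, m{f^beta > t})^upsilon * S(s, m{g^gamma > s})^tau.  The integrals on the
   right are the infima of these two level functions over (0, 1], and continuity
   of star lets the bound pass to the infima.  The level u must be positive to be
   admissible; this follows from the hypothesis at a = b = 0. *)

Lemma unit01_itvoc {R : realType} {t : R} : 0 < t <= 1 -> unit01 t.
Proof. by case/andP=> /ltW t0 t1; apply/andP. Qed.

Section PowR.
Context {R : realType}.
Implicit Types x y r s : R.

Lemma powR_le2r {r x y} : 0 <= r -> 0 <= x -> x <= y -> x `^ r <= y `^ r.
Proof. by move=> r0 x0 xy; apply: ge0_ler_powR; rewrite ?nnegrE// (le_trans x0). Qed.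

Lemma powR_lt2r {r x y} : 0 < r -> 0 <= x -> x < y -> x `^ r < y `^ r.
Proof.
by move=> r0 x0 xy; apply: gt0_ltr_powR; rewrite ?nnegrE// ltW// (le_lt_trans x0).
Qed.

Lemma powR01 {x r} : unit01 x -> 0 <= r -> unit01 (x `^ r).
Proof.
move=> /andP[x0 x1] r0; rewrite /unit01 powR_ge0 /=.
by have := powR_le2r r0 x0 x1; rewrite powR1.
Qed.

Lemma powR_itvoc {x r} : 0 < x <= 1 -> 0 <= r -> 0 < x `^ r <= 1.
Proof.
move=> x01 r0; have /andP[_ ->] := powR01 (unit01_itvoc x01) r0.
by rewrite powR_gt0//; case/andP: x01.
Qed.

Lemma powRVK {r x} : 0 < r -> 0 <= x -> (x `^ r^-1) `^ r = x.
Proof. by move=> r0 x0; rewrite -powRrM mulVf ?gt_eqF// powRr1. Qed.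

Lemma powRKV {r x} : 0 < r -> 0 <= x -> (x `^ r) `^ r^-1 = x.
Proof. by move=> r0 x0; rewrite -powRrM mulfV ?gt_eqF// powRr1. Qed.

Lemma powRV_le_powR {r s x y} : 0 < x <= 1 -> x <= y -> 0 < r -> 0 <= s ->
  r * s <= 1 -> x `^ r^-1 <= y `^ s.
Proof.
move=> x01 xy r0 s0 rs1; have [x0 _] := andP x01.
apply: le_trans (powR_le2r s0 (ltW x0) xy); apply: ger_powR => //.
by rewrite -(ler_pM2l r0) mulfV ?gt_eqF.
Qed.

Lemma level_set_powR {T : Type} {h : T -> R} {r t : R} : 0 < r -> 0 <= t ->
  (forall z, 0 <= h z) -> [set z | t < h z `^ r] = [set z | t `^ r^-1 < h z].
Proof.
move=> r0 t0 h0; have rV0 : 0 < r^-1 by rewrite invr_gt0.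
apply/seteqP; split=> z /= ht.
- by rewrite -(powRKV r0 (h0 z)); apply: powR_lt2r.
- by rewrite -(powRVK r0 t0); apply: powR_lt2r; rewrite ?powR_ge0.
Qed.

Lemma inf_adherent_powR {P : R -> Prop} {F : R -> R} {r A e : R} :
  0 < r -> 0 <= A -> 0 < e -> (forall t, P t -> A <= F t) ->
  (forall e, 0 < e -> exists2 t, P t & F t < A + e) ->
  exists2 t, P t & `|A `^ r - F t `^ r| < e.
Proof.
move=> r0 A0 e0 lbF adhF.
have rV0 : 0 < r^-1 by rewrite invr_gt0.
pose w := (A `^ r + e) `^ r^-1.
have w_pow : w `^ r = A `^ r + e by rewrite powRVK// addr_ge0 ?powR_ge0 ?ltW.
have Aw : A < w.
  by rewrite -(powRKV r0 A0); apply: powR_lt2r; rewrite ?powR_ge0 ?ltrDl.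
have [t Pt Ft] : exists2 t, P t & F t < A + (w - A) by apply: adhF; rewrite subr_gt0.
exists t => //; have AF := lbF t Pt.
have AFr : A `^ r <= F t `^ r by exact: powR_le2r (ltW r0) A0 AF.
have Fw : F t `^ r < w `^ r.
  by apply: powR_lt2r (le_trans A0 AF) _; rewrite addrC subrK in Ft.
rewrite ler0_norm ?subr_le0//; lra.
Qed.

End PowR.

Lemma comonotone_level_sets {T : Type} {R : realType} {f g : T -> R} a b :
  comonotone f g ->
  [set x | a < f x] `<=` [set x | b < g x] \/ [set x | b < g x] `<=` [set x | a < f x].
Proof.
move=> com; have [|/existsNP[x /not_implyP[/= fx /negP]]] :=
  pselect ([set x | a < f x] `<=` [set x | b < g x]); first by left.
rewrite -leNgt => gx; right=> y /= gy; rewrite ltNge; apply/negP=> fy.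
have := com x y; rewrite leNgt pmulr_rlt0 ?subr_gt0 ?(le_lt_trans fy fx)//.
by rewrite subr_lt0 (le_lt_trans gx gy).
Qed.

Lemma measurable_level_set {d} {T : measurableType d} {R : realType} {k : T -> R}
  (r : R) : measurable_fun setT k -> measurable [set x | r < k x].
Proof.
move=> mk; have := mk measurableT _ (measurable_itv `]r, +oo[).
by rewrite setTI preimage_itvoy.
Qed.

Definition semiconorm_level {d} {T : measurableType d} {R : realType}
  (S : R -> R -> R) (m : set T -> \bar R) (h : T -> R) (t : R) : R :=
  S t (fine (m [set x | t < h x])).

Section SemiconormedIntegral.
Context {d} {T : measurableType d} {R : realType}.
Context {S : R -> R -> R} {m : set T -> \bar R}.
Hypotheses (hS : t_semiconorm S) (mm : monotone_measure m) (m1 : m setT = 1%E).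

Lemma semiconorm_ge_left {a c} : unit01 a -> unit01 c -> a <= S a c.
Proof.
case: hS => _ _ Smon2 S0 a01 c01; rewrite -[leLHS](S0 a a01).1.
by apply: Smon2 => //; [apply/andP; rewrite lexx ler01 | case/andP: c01].
Qed.

Lemma semiconorm_ge_right {a c} : unit01 a -> unit01 c -> c <= S a c.
Proof.
case: hS => _ Smon1 _ S0 a01 c01; rewrite -[leLHS](S0 c c01).2.
by apply: Smon1 => //; [apply/andP; rewrite lexx ler01 | case/andP: a01].
Qed.

Lemma fine_measureK A : measurable A -> (fine (m A))%:E = m A.
Proof.
case: mm => m0 _ mono mA; rewrite fineK// ge0_fin_numE; last first.
  by rewrite -m0; apply: mono.
by rewrite (le_lt_trans _ (ltry 1)) // -m1; apply: mono.
Qed.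

Lemma fine_measure01 A : measurable A -> unit01 (fine (m A)).
Proof.
case: mm => m0 _ mono mA; rewrite /unit01 -!lee_fin fine_measureK//.
apply/andP; split; last by rewrite -m1; apply: mono.
by have := mono set0 A measurable0 mA (sub0set A); rewrite m0.
Qed.

Lemma le_fine_measure A B : measurable A -> measurable B -> A `<=` B ->
  fine (m A) <= fine (m B).
Proof.
case: mm => _ _ mono mA mB AB.
by rewrite -lee_fin !fine_measureK//; apply: mono.
Qed.

Context {h : T -> R}.
Hypothesis mh : measurable_fun setT h.

Lemma semiconorm_level01 {t} : 0 < t <= 1 -> unit01 (semiconorm_level S m h t).
Proof.
case: hS => S01 _ _ _ /unit01_itvoc t01.
exact/(S01 _ _ t01)/fine_measure01/measurable_level_set.
Qed.

Lemma semiconorm_level_ge {t} : 0 < t <= 1 -> t <= semiconorm_level S m h t.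
Proof.
move=> /unit01_itvoc t01.
exact/(semiconorm_ge_left t01)/fine_measure01/measurable_level_set.
Qed.

Let levels := [set semiconorm_level S m h t | t in `]0, 1]].

Let levels_lbound : has_lbound levels.
Proof. by exists 0 => _ [t + <-]; rewrite /= in_itv => /semiconorm_level01 /andP[]. Qed.

Let levels_nonempty : nonempty levels.
Proof. by exists (semiconorm_level S m h 1), 1 => //=; rewrite in_itv /= ltr01 lexx. Qed.

Lemma semiconormed_integral_le_level {t} : 0 < t <= 1 ->
  semiconormed_integral S m h <= semiconorm_level S m h t.
Proof. by move=> t01; apply: (ge_inf levels_lbound); exists t; rewrite /= ?in_itv. Qed.

Lemma semiconormed_integral01 : unit01 (semiconormed_integral S m h).
Proof.
apply/andP; split.
  apply: lb_le_inf levels_nonempty _ => _ [t + <-].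
  by rewrite /= in_itv => /semiconorm_level01 /andP[].
have one01 : 0 < (1 : R) <= 1 by rewrite ltr01 lexx.
rewrite (le_trans (semiconormed_integral_le_level one01))//.
by case/andP: (semiconorm_level01 one01).
Qed.

Lemma semiconormed_integral_adherent e : 0 < e -> exists2 t, 0 < t <= 1 &
  semiconorm_level S m h t < semiconormed_integral S m h + e.
Proof.
move=> e0; have [_ [t t01 <-] ht] := inf_adherent e0 (conj levels_nonempty levels_lbound).
by exists t; rewrite ?in_itv in t01.
Qed.

End SemiconormedIntegral.

Lemma rat_approx_unit01 {R : realType} {y e : R} : unit01 y -> 0 < e ->
  exists q : rat, ratr q < y /\ `|y - Order.max (ratr q) 0| < e.
Proof.
move=> /andP[y0 _] e0.
have [q] : exists q : rat, (ratr q : R) \in `](y - e), y[.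
  by apply: rat_in_itvoo; rewrite ltrBlDr ltrDl.
rewrite in_itv /= => /andP[yq qy]; exists q; split => //.
have [q0|q0] := leP 0 (ratr q : R).
  by rewrite ger0_norm ?subr_ge0 ?ltW//; lra.
by rewrite subr0 ger0_norm//; lra.
Qed.

Lemma unit01_max0 {R : realType} {r : R} : r <= 1 -> unit01 (Order.max r 0).
Proof. by move=> r1; rewrite /unit01 le_max lexx orbT ge_max r1 ler01. Qed.

Section ContNondecrOp.
Context {R : realType} {star : R -> R -> R}.
Hypothesis hstar : cont_nondecr_op star.

Lemma cont_nondecr_op_dist {p0 q0 e : R} : unit01 p0 -> unit01 q0 -> 0 < e ->
  exists2 dd, 0 < dd & forall p q, unit01 p -> unit01 q ->
    `|p0 - p| < dd -> `|q0 - q| < dd -> `|star p0 q0 - star p q| < e.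
Proof.
case: hstar => _ cont _ _ p01 q01 e0.
have /cvgrPdist_lt/(_ e e0) := (subspace_continuousP _ _).1 cont (p0, q0) (conj p01 q01).
rewrite near_withinE => /nbhs_ballP[dd /= dd0 ball_dd].
by exists dd => // p q p01' q01' pd qd; apply: (ball_dd (p, q)).
Qed.

Lemma measurable_fun_cont_nondecr_op {d} {T : measurableType d} {f g : T -> R} :
  F01 f -> F01 g -> measurable_fun setT (fun x => star (f x) (g x)).
Proof.
move=> [mf f01] [mg g01]; have [_ _ mon1 mon2] := hstar.
apply: (measurability _ (RGenOInfty.measurableE R)) => //.
move=> /= _ [_ [a ->] <-]; rewrite preimage_itvoy setTI.
(* star is continuous and nondecreasing, so a < star (f x) (g x) is witnessed by
   rationals q1 < f x, q2 < g x, clamped at 0 to stay in the domain of star. *)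
rewrite [X in measurable X](_ : _ = \bigcup_(q1 : rat) \bigcup_(q2 : rat)
  (if a < star (Order.max (ratr q1) 0) (Order.max (ratr q2) 0)
   then [set x | ratr q1 < f x] `&` [set x | ratr q2 < g x] else set0)).
  apply: bigcupT_measurable_rat => q1; apply: bigcupT_measurable_rat => q2.
  by case: ifP => _ //; apply: measurableI; apply: measurable_level_set.
apply/seteqP; split=> x /=.
- move=> afg; have e0 : 0 < star (f x) (g x) - a by rewrite subr_gt0.
  have [dd dd0 near_fg] := cont_nondecr_op_dist (f01 x) (g01 x) e0.
  have [q1 [q1f q1d]] := rat_approx_unit01 (f01 x) dd0.
  have [q2 [q2g q2d]] := rat_approx_unit01 (g01 x) dd0.
  have q1_01 := unit01_max0 (ltW (lt_le_trans q1f (proj2 (andP (f01 x))))).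
  have q2_01 := unit01_max0 (ltW (lt_le_trans q2g (proj2 (andP (g01 x))))).
  have /(le_lt_trans (ler_norm _)) := near_fg _ _ q1_01 q2_01 q1d q2d.
  by move=> near; exists q1 => //; exists q2 => //; rewrite ifT //; lra.
- move=> [q1 _ [q2 _]]; case: ifP => // aq [/= q1f q2g].
  have [f0 f1] := andP (f01 x); have [g0 g1] := andP (g01 x).
  have q1_01 := unit01_max0 (ltW (lt_le_trans q1f f1)).
  have q2_01 := unit01_max0 (ltW (lt_le_trans q2g g1)).
  apply: (lt_le_trans aq); apply: le_trans (mon1 _ _ _ q1_01 (f01 x) q2_01 _) _.
    by rewrite ge_max (ltW q1f).
  by apply: mon2 => //; rewrite ge_max (ltW q2g).
Qed.

End ContNondecrOp.

Section IntegralInequality.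
Context {d} {T : measurableType d} {R : realType}.
Context {f g : T -> R} {star S : R -> R -> R} {m : set T -> \bar R}.
Context {alpha beta gamma lambda upsilon tau : R}.
Hypotheses (Ff : F01 f) (Fg : F01 g) (fg_comonotone : comonotone f g).
Hypotheses (hstar : cont_nondecr_op star) (hS : t_semiconorm S).
Hypotheses (alpha0 : 0 < alpha) (beta0 : 0 < beta) (gamma0 : 0 < gamma).
Hypotheses (lambda0 : 0 < lambda) (upsilon0 : 0 < upsilon) (tau0 : 0 < tau).
Hypotheses (gamma_tau : gamma * tau <= 1) (beta_upsilon : beta * upsilon <= 1).
Hypothesis star_S_ineq : forall a b c, unit01 a -> unit01 b -> unit01 c ->
  (S ((star a b) `^ alpha) c) `^ lambda <=
    Num.min (star ((S (a `^ beta) c) `^ upsilon) b)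
            (star a ((S (b `^ gamma) c) `^ tau)).
Hypotheses (mm : monotone_measure m) (m1 : m setT = 1%E).

Local Notation h := (fun x => star (f x) (g x) `^ alpha).
Local Notation f_beta := (fun x => f x `^ beta).
Local Notation g_gamma := (fun x => g x `^ gamma).
Local Notation I := (semiconormed_integral S m).
Local Notation level := (semiconorm_level S m).

Let f01 := Ff.2.
Let g01 := Fg.2.
Let f0 x : 0 <= f x. Proof. by case/andP: (f01 x). Qed.
Let g0 x : 0 <= g x. Proof. by case/andP: (g01 x). Qed.
Let zero01 : unit01 (0 : R). Proof. by rewrite /unit01 lexx ler01. Qed.

Let measurable_h : measurable_fun setT h.
Proof.
exact: (measurableT_comp (@measurable_powR R alpha) (measurable_fun_cont_nondecr_op hstar Ff Fg)).
Qed.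
Let measurable_f_beta : measurable_fun setT f_beta.
Proof. exact: (measurableT_comp (@measurable_powR R beta) Ff.1). Qed.
Let measurable_g_gamma : measurable_fun setT g_gamma.
Proof. exact: (measurableT_comp (@measurable_powR R gamma) Fg.1). Qed.

Let level_f_beta01 {t} : 0 < t <= 1 -> unit01 (level f_beta t `^ upsilon).
Proof. by move=> t01; apply: powR01 (ltW upsilon0); apply: semiconorm_level01. Qed.
Let level_g_gamma01 {s} : 0 < s <= 1 -> unit01 (level g_gamma s `^ tau).
Proof. by move=> s01; apply: powR01 (ltW tau0); apply: semiconorm_level01. Qed.

Lemma star_gt0 a : 0 < a <= 1 -> 0 < star a 0.
Proof.
have [star01 _ _ _] := hstar; have [_ _ _ S0] := hS.
move=> /andP[a0 a1]; pose c := a `^ upsilon^-1.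
have c0 : 0 < c by apply: powR_gt0.
have c01 : unit01 c by apply: powR01; rewrite ?invr_ge0 ?ltW// /unit01 ltW.
have := star_S_ineq _ _ _ zero01 zero01 c01.
rewrite (powR0 (lt0r_neq0 beta0)) (S0 c c01).2 (powRVK upsilon0 (ltW a0)).
rewrite le_min => /andP[+ _].
apply: lt_le_trans; apply: lt_le_trans (powR_gt0 _ c0) _.
apply: powR_le2r (ltW lambda0) (ltW c0) _; apply: semiconorm_ge_right => //.
by apply: powR01 (ltW alpha0); apply: star01.
Qed.

Lemma level_star_subset a b : unit01 a -> unit01 b ->
  [set x | star a b `^ alpha < h x] `<=` [set x | a < f x] `|` [set x | b < g x].
Proof.
have [star01 _ mon1 mon2] := hstar.
move=> a01 b01 x /= hx; have [fa|fa] := ltP a (f x); first by left.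
have [gb|gb] := ltP b (g x); first by right.
move: hx; rewrite ltNge => /negP[]; apply: powR_le2r (ltW alpha0) _ _.
  by case/andP: (star01 _ _ (f01 x) (g01 x)).
by apply: le_trans (mon1 _ _ _ (f01 x) a01 (g01 x) fa) _; apply: mon2.
Qed.

Lemma integral_le_level_f_or_g a b : 0 < a <= 1 -> 0 < b <= 1 ->
  I h <= S (star a b `^ alpha) (fine (m [set x | a < f x])) \/
  I h <= S (star a b `^ alpha) (fine (m [set x | b < g x])).
Proof.
have [star01 _ _ mon2] := hstar; have [_ _ Smon2 _] := hS.
move=> /[dup] /unit01_itvoc a01 /star_gt0 a0 /[dup] /unit01_itvoc b01 /andP[b0 _].
set u := star a b `^ alpha.
have u01 : unit01 u by apply: powR01 (ltW alpha0); apply: star01.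
have u0 : 0 < u.
  by apply: powR_gt0; apply: lt_le_trans a0 (mon2 _ _ _ a01 zero01 b01 (ltW b0)).
have Ih_le : I h <= level h u.
  by apply: semiconormed_integral_le_level; rewrite ?u0//; case/andP: u01.
have le_subset A : measurable A -> [set x | u < h x] `<=` A -> I h <= S u (fine (m A)).
  move=> mA hA; apply: le_trans Ih_le _; rewrite /semiconorm_level.
  have mhu := measurable_level_set u measurable_h.
  apply: Smon2 (u01) (fine_measure01 mm m1 _ mhu) (fine_measure01 mm m1 _ mA) _.
  exact: le_fine_measure.
have sub := level_star_subset a b a01 b01.
have [fg|gf] := comonotone_level_sets a b fg_comonotone; [right | left].
- apply: le_subset; first exact: measurable_level_set _ Fg.1.
  by move=> x /sub[/fg|].
- apply: le_subset; first exact: measurable_level_set _ Ff.1.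
  by move=> x /sub[|/gf].
Qed.

Lemma le_star_levels t s : 0 < t <= 1 -> 0 < s <= 1 ->
  I h `^ lambda <= star (level f_beta t `^ upsilon) (level g_gamma s `^ tau).
Proof.
have [_ _ mon1 mon2] := hstar.
move=> t01 s01; have [t0 _] := andP t01; have [s0 _] := andP s01.
pose a := t `^ beta^-1; pose b := s `^ gamma^-1.
have a01 : 0 < a <= 1 by apply: powR_itvoc t01 _; rewrite invr_ge0 ltW.
have b01 : 0 < b <= 1 by apply: powR_itvoc s01 _; rewrite invr_ge0 ltW.
have level_f : level f_beta t = S (a `^ beta) (fine (m [set x | a < f x])).
  by rewrite /semiconorm_level (level_set_powR beta0 (ltW t0) f0) powRVK ?ltW.
have level_g : level g_gamma s = S (b `^ gamma) (fine (m [set x | b < g x])).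
  by rewrite /semiconorm_level (level_set_powR gamma0 (ltW s0) g0) powRVK ?ltW.
have Ih0 : 0 <= I h by case/andP: (semiconormed_integral01 hS mm m1 measurable_h).
have F01 := level_f_beta01 t01; have G01 := level_g_gamma01 s01.
have [Ih_f|Ih_g] := integral_le_level_f_or_g a b a01 b01.
- apply: le_trans (powR_le2r (ltW lambda0) Ih0 Ih_f) _.
  apply: le_trans (star_S_ineq _ _ _ (unit01_itvoc a01) (unit01_itvoc b01)
    (fine_measure01 mm m1 _ (measurable_level_set _ Ff.1))) _.
  rewrite level_f ge_min; apply/orP; left; rewrite level_f in F01.
  apply: (mon2 _ _ _ F01 (unit01_itvoc b01) G01); rewrite /b.
  apply: (powRV_le_powR s01 _ gamma0 (ltW tau0) gamma_tau).
  exact: semiconorm_level_ge.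
- apply: le_trans (powR_le2r (ltW lambda0) Ih0 Ih_g) _.
  apply: le_trans (star_S_ineq _ _ _ (unit01_itvoc a01) (unit01_itvoc b01)
    (fine_measure01 mm m1 _ (measurable_level_set _ Fg.1))) _.
  rewrite level_g ge_min; apply/orP; right; rewrite level_g in G01.
  apply: (mon1 _ _ _ (unit01_itvoc a01) F01 G01); rewrite /a.
  apply: (powRV_le_powR t01 _ beta0 (ltW upsilon0) beta_upsilon).
  exact: semiconorm_level_ge.
Qed.

Lemma le_star_integrals :
  I h `^ lambda <= star (I f_beta `^ upsilon) (I g_gamma `^ tau).
Proof.
have If01 := semiconormed_integral01 hS mm m1 measurable_f_beta.
have Ig01 := semiconormed_integral01 hS mm m1 measurable_g_gamma.
have [If0 _] := andP If01; have [Ig0 _] := andP Ig01.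
apply/ler_addgt0Pr => e e0.
have [dd dd0 near_star] := cont_nondecr_op_dist hstar
  (powR01 If01 (ltW upsilon0)) (powR01 Ig01 (ltW tau0)) e0.
have [t t01 near_t] := inf_adherent_powR upsilon0 If0 dd0
  (fun t => semiconormed_integral_le_level hS mm m1 measurable_f_beta)
  (semiconormed_integral_adherent hS mm m1 measurable_f_beta).
have [s s01 near_s] := inf_adherent_powR tau0 Ig0 dd0
  (fun s => semiconormed_integral_le_level hS mm m1 measurable_g_gamma)
  (semiconormed_integral_adherent hS mm m1 measurable_g_gamma).
have := near_star _ _ (level_f_beta01 t01) (level_g_gamma01 s01) near_t near_s.
rewrite distrC => /(le_lt_trans (ler_norm _)); rewrite ltrBlDl => /ltW.
exact: le_trans (le_star_levels t s t01 s01).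
Qed.

End IntegralInequality.

Theorem corollary4p3 (d : measure_display) (T : measurableType d) (R : realType)
  (f g : T -> R) (star S : R -> R -> R)
  (alpha beta gamma lambda upsilon tau : R) :
  F01 f -> F01 g -> comonotone f g ->
  cont_nondecr_op star -> t_semiconorm S ->
  0 < alpha -> 0 < beta -> 0 < gamma -> 0 < lambda -> 0 < upsilon -> 0 < tau ->
  gamma * tau <= 1 -> beta * upsilon <= 1 ->
  (forall a b c, unit01 a -> unit01 b -> unit01 c ->
     (S ((star a b) `^ alpha) c) `^ lambda <=
       Num.min (star ((S (a `^ beta) c) `^ upsilon) b)
               (star a ((S (b `^ gamma) c) `^ tau))) ->
  forall m : set T -> \bar R, monotone_measure m -> m setT = 1%E ->
    (semiconormed_integral S m (fun x => (star (f x) (g x)) `^ alpha)) `^ lambda <=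
      star ((semiconormed_integral S m (fun x => f x `^ beta)) `^ upsilon)
           ((semiconormed_integral S m (fun x => g x `^ gamma)) `^ tau).
Proof.
move=> Ff Fg fg hstar hS alpha0 beta0 gamma0 lambda0 upsilon0 tau0 gt bu ineq m mm m1.
exact: (le_star_integrals Ff Fg fg hstar hS alpha0 beta0 gamma0 lambda0 upsilon0 tau0
  gt bu ineq mm m1).
Qed.
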